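(* $11\notin\operatorname{Spec}(32_{65})$.
   Context: $32_{65}$ is the finite integral symmetric relation algebra with atoms $1'$, $a$, $b$, $c$, all symmetric, in which a diversity cycle $xyz$ (with $x,y,z\in\{a,b,c\}$) is mandatory (i.e. $x;y\ge z$) if it involves $a$ and forbidden (i.e. $x;y\cdot z=0$) otherwise. A representation over a set $U$ is an embedding into the full relation algebra on $U\times U$. $\operatorname{Spec}(A)$ is the set of cardinals $\alpha\le\omega$ such that $A$ has a representation over a set of cardinality $\alpha$. *)

From HB Require Import structures.
From mathcomp Require Import all_boot.
Set Implicit Arguments. Unset Strict Implicit. Unset Printing Implicit Defensive.

(* Atoms of 32_65: the identity atom e = 1', and diversity atoms a, b, c. *)
Inductive atom := e | a | b | c.

Definition atom_to_ord (x : atom) : 'I_4 :=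
  match x with e => inord 0 | a => inord 1 | b => inord 2 | c => inord 3 end.
Definition ord_to_atom (i : 'I_4) : atom :=
  match val i with 0 => e | 1 => a | 2 => b | _ => c end.
Lemma atom_to_ordK : cancel atom_to_ord ord_to_atom.
Proof. by case; rewrite /ord_to_atom /= inordK. Qed.

HB.instance Definition _ := Equality.copy atom (can_type atom_to_ordK).
HB.instance Definition _ := Choice.copy atom (can_type atom_to_ordK).
HB.instance Definition _ := Countable.copy atom (can_type atom_to_ordK).
HB.instance Definition _ := Finite.copy atom (can_type atom_to_ordK).

Definition atom_conv (x : atom) : atom := x.

(* Composition of atoms: e is the identity; for diversity atoms x, y,
   e <= x;y iff y = converse of x (= x), and a diversity atom z lies below
   x;y iff the cycle xyz is mandatory, i.e. iff it involves a. *)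
Definition atom_comp (x y : atom) : {set atom} :=
  match x, y with
  | e, _ => [set y]
  | _, e => [set x]
  | _, _ => [set z | ((z == e) && (y == atom_conv x))
                     || ((z != e) && [|| x == a, y == a | z == a])]
  end.

(* The relation algebra 32_65 = complex algebra of the atom structure:
   elements are sets of atoms; Boolean operations are the set operations. *)
Definition RA := {set atom}.
Definition ra_one : RA := [set e].
Definition ra_conv (X : RA) : RA := [set atom_conv x | x in X].
Definition ra_comp (X Y : RA) : RA :=
  \bigcup_(x in X) \bigcup_(y in Y) atom_comp x y.

Definition rel_id (U : finType) : {set U * U} := [set p | p.1 == p.2].
Definition rel_conv (U : finType) (R : {set U * U}) : {set U * U} :=
  [set p | (p.2, p.1) \in R].
Definition rel_comp (U : finType) (R S : {set U * U}) : {set U * U} :=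
  [set p | [exists z, ((p.1, z) \in R) && ((z, p.2) \in S)]].

Definition is_representation (U : finType) (h : RA -> {set U * U}) : Prop :=
  injective h /\
  (forall X Y, h (X :|: Y) = h X :|: h Y) /\
  (forall X, h (~: X) = ~: h X) /\
  h ra_one = rel_id U /\
  (forall X, h (ra_conv X) = rel_conv (h X)) /\
  (forall X Y, h (ra_comp X Y) = rel_comp (h X) (h Y)).

Definition in_Spec (n : nat) : Prop :=
  exists (U : finType) (h : RA -> {set U * U}), #|U| = n /\ is_representation h.

(* A representation labels each pair (u, v) by the unique atom whose image contains it; call u and v
   adjacent when that label is b or c.  Since the cycles avoiding a are forbidden, this graph is
   triangle-free, and since those through a are mandatory, every a-labelled pair has four common
   neighbours (realising bb, cc, bc and cb) and every edge uv lies under an a-a path through a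
   vertex w adjacent to neither end, so deg u + deg v <= |U| - 1.  A vertex of degree at most 4
   would have its neighbourhood inside that of each of its |U| - 5 a-neighbours, so any of its
   neighbours would have degree at least |U| - 4, violating the edge bound.  Hence all degrees are
   at least 5, and for |U| = 11 the graph is 5-regular on 11 vertices: impossible by the
   handshake lemma. *)

From mathcomp Require Import all_boot zify.

Set Implicit Arguments.
Unset Strict Implicit.

(* Equality on [atom] is transported from ['I_4] through [inord], whose proofs are opaque, so it
   does not reduce on constructors; [atom_eqE] replaces it by a computing one. *)
Definition atom_eqb (x y : atom) : bool :=
  match x, y with e, e | a, a | b, b | c, c => true | _, _ => false end.

Lemma atom_eqE (x y : atom) : (x == y) = atom_eqb x y.
Proof. by case: x; case: y; rewrite ?eqxx //=; apply/eqP. Qed.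

Lemma e_in_comp_diag (x : atom) : e \in atom_comp x x.
Proof. by case: x; rewrite !inE !atom_eqE. Qed.

Lemma mandatory_cycle (x y z : atom) : x != e -> y != e -> z != e ->
  a \in [set x; y; z] -> z \in atom_comp x y.
Proof. by case: x; case: y; case: z; rewrite !inE !atom_eqE. Qed.

Lemma forbidden_cycle (x y z : atom) : x \in [set b; c] -> y \in [set b; c] ->
  z \in [set b; c] -> z \notin atom_comp x y.
Proof. by case: x; case: y; case: z; rewrite !inE !atom_eqE. Qed.

Lemma bc_neq_e (p : atom) : p \in [set b; c] -> p != e.
Proof. by case/set2P => ->; rewrite atom_eqE. Qed.

Section RepresentationLabel.

Variables (U : finType) (h : RA -> {set U * U}).
Hypothesis hrep : is_representation h.

Lemma rep_setU (X Y : RA) : h (X :|: Y) = h X :|: h Y.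
Proof. by case: hrep => _ []. Qed.

Lemma rep_setC (X : RA) : h (~: X) = ~: h X.
Proof. by case: hrep => _ [_ []]. Qed.

Lemma rep_sub (X Y : RA) : X \subset Y -> h X \subset h Y.
Proof. by move/setUidPr => <-; rewrite rep_setU subsetUl. Qed.

Definition atom_label (u v : U) : atom := odflt e [pick p | (u, v) \in h [set p]].

Lemma mem_rep_label (u v : U) : (u, v) \in h [set atom_label u v].
Proof.
rewrite /atom_label; case: pickP => [//|none].
have : (u, v) \in h [set: atom] by rewrite -(setUCr [set e]) rep_setU rep_setC setUCr inE.
have -> : [set: atom] = [set e; a; b; c] by apply/setP; case; rewrite !inE !atom_eqE.
by rewrite !rep_setU !inE !none.
Qed.

Lemma mem_rep (X : RA) (u v : U) : ((u, v) \in h X) = (atom_label u v \in X).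
Proof.
have [inX | notinX] := boolP (atom_label u v \in X).
  by apply: subsetP (mem_rep_label u v); apply: rep_sub; rewrite sub1set.
have : (u, v) \in h (~: X).
  by apply: subsetP (mem_rep_label u v); apply: rep_sub; rewrite sub1set inE.
by rewrite rep_setC inE => /negbTE.
Qed.

Lemma atom_label_eq_e (u v : U) : (atom_label u v == e) = (u == v).
Proof.
case: hrep => _ [_ [_ [h1 _]]].
by rewrite -[_ == e]in_set1 -mem_rep -/ra_one h1 inE.
Qed.

Lemma atom_label_sym (u v : U) : atom_label u v = atom_label v u.
Proof.
case: hrep => _ [_ [_ [_ [hconv _]]]].
have := mem_rep_label v u.
rewrite -[[set _]]imset_id -/(ra_conv _) hconv inE /= mem_rep in_set1.
by move/eqP.
Qed.

Lemma atom_label_comp (p q : atom) (u w : U) : (atom_label u w \in atom_comp p q) =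
  [exists v, (atom_label u v == p) && (atom_label v w == q)].
Proof.
case: hrep => _ [_ [_ [_ [_ hcomp]]]].
have -> : atom_comp p q = ra_comp [set p] [set q] by rewrite /ra_comp !big_set1.
rewrite -mem_rep hcomp inE /=.
by apply: eq_existsb => v; rewrite !mem_rep !in_set1.
Qed.

End RepresentationLabel.

Lemma sum_card_rel_even (T : finType) (r : rel T) :
  symmetric r -> irreflexive r -> ~~ odd (\sum_x #|[set y | r x y]|).
Proof.
move=> r_sym r_irr.
pose f x y := r x y && (enum_rank x < enum_rank y).
have r_split x y : (r x y : nat) = f x y + f y x.
  rewrite /f r_sym; case: (boolP (r y x)) => //= ryx.
  have : (enum_rank x : nat) != enum_rank y.
    by apply: contraTneq ryx => /val_inj /enum_rank_inj ->; rewrite r_irr.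
  by case: ltngtP.
have -> : \sum_x #|[set y | r x y]| = \sum_x \sum_y f x y + \sum_x \sum_y f y x.
  rewrite -big_split; apply: eq_bigr => x _.
  rewrite -sum1_card big_mkcond -big_split; apply: eq_bigr => y _ /=.
  by rewrite inE -r_split; case: (r x y).
by rewrite [X in _ + X]exchange_big oddD addbb.
Qed.

Section AtomNetwork.

Variables (U : finType) (lab : U -> U -> atom).
Hypothesis lab_eq_e : forall u v, (lab u v == e) = (u == v).
Hypothesis lab_sym : forall u v, lab u v = lab v u.
Hypothesis lab_comp : forall p q u w,
  (lab u w \in atom_comp p q) = [exists v, (lab u v == p) && (lab v w == q)].

Lemma lab_in_comp (u v w : U) : lab u w \in atom_comp (lab u v) (lab v w).
Proof. by rewrite lab_comp; apply/existsP; exists v; rewrite !eqxx. Qed.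

Lemma lab_split (p q : atom) (u w : U) :
  lab u w \in atom_comp p q -> exists v, lab u v = p /\ lab v w = q.
Proof. by rewrite lab_comp => /existsP [v /andP [/eqP ? /eqP ?]]; exists v. Qed.

Lemma lab_diag (u : U) : lab u u = e.
Proof. by apply/eqP; rewrite lab_eq_e. Qed.

Lemma exists_lab (p : atom) (u : U) : exists v, lab u v = p.
Proof.
have : lab u u \in atom_comp p p by rewrite lab_diag e_in_comp_diag.
by case/lab_split => v [? _]; exists v.
Qed.

Definition adj : rel U := fun u v => lab u v \in [set b; c].
Definition nbhd (u : U) : {set U} := [set v | adj u v].
Definition a_nbhd (u : U) : {set U} := [set v | lab u v == a].

Lemma adj_sym : symmetric adj.
Proof. by move=> u v; rewrite /adj lab_sym. Qed.

Lemma adj_irr : irreflexive adj.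
Proof. by move=> u; rewrite /adj lab_diag !inE !atom_eqE. Qed.

Lemma adj_triangle_free (u v w : U) : adj u v -> adj v w -> ~~ adj u w.
Proof.
move=> uv vw; apply/negP => uw.
by have := lab_in_comp u v w; rewrite (negbTE (forbidden_cycle uv vw uw)).
Qed.

Lemma exists_adj (u : U) : exists v, adj u v.
Proof. by have [v uv] := exists_lab b u; exists v; rewrite /adj uv !inE eqxx. Qed.

Lemma card_nbhd_a_nbhd (u : U) : #|nbhd u| + #|a_nbhd u| = #|U|.-1.
Proof.
rewrite -(cardsC1 u).
have -> : [set~ u] = nbhd u :|: a_nbhd u.
  apply/setP => v; rewrite !inE /adj eq_sym -lab_eq_e.
  by case: (lab u v); rewrite !inE !atom_eqE.
rewrite cardsU; have -> : nbhd u :&: a_nbhd u = set0.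
  by apply/setP => v; rewrite !inE /adj; case: (lab u v); rewrite !inE !atom_eqE.
by rewrite cards0 subn0.
Qed.

Lemma card_nbhd_edge (u v : U) : adj u v -> #|nbhd u| + #|nbhd v| <= #|U|.-1.
Proof.
move=> uv.
have [w [uw wv]] : exists w, lab u w = a /\ lab w v = a.
  by apply/lab_split/mandatory_cycle; rewrite ?(bc_neq_e uv) ?atom_eqE // !inE eqxx.
have disj : nbhd u :&: nbhd v = set0.
  apply/setP => z; rewrite in_set0 in_setI !in_set; apply/negP => /andP [uz vz].
  by case/negP: (adj_triangle_free uz (etrans (adj_sym z v) vz)).
have sub : nbhd u :|: nbhd v \subset [set~ w].
  apply/subsetP => z; rewrite in_setC1 in_setU !in_set; apply: contraL => /eqP ->.
  by rewrite /adj uw lab_sym wv !inE !atom_eqE.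
by rewrite -(cardsC1 w) -[_ + _]subn0 -(cards0 U) -disj -cardsU subset_leq_card.
Qed.

Lemma card_common_nbhd (u m : U) : lab u m = a -> 4 <= #|nbhd u :&: nbhd m|.
Proof.
move=> um.
have sub : setX [set b; c] [set b; c]
    \subset [set (lab u w, lab w m) | w in nbhd u :&: nbhd m].
  apply/subsetP => -[p q]; rewrite in_setX => /andP [bp bq].
  have [w [uw wm]] : exists w, lab u w = p /\ lab w m = q.
    apply/lab_split; rewrite um mandatory_cycle ?(bc_neq_e bp) ?(bc_neq_e bq) ?atom_eqE //.
    by rewrite !inE eqxx !orbT.
  apply/imsetP; exists w; last by rewrite uw wm.
  by rewrite in_setI !in_set /adj uw lab_sym wm bp bq.
have card_bc2 : #|setX [set b; c] [set b; c]| = 4 by rewrite cardsX cards2 atom_eqE.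
by rewrite -card_bc2 (leq_trans (subset_leq_card sub)) ?leq_imset_card.
Qed.

Lemma nbhd_sub_small (u m : U) :
  lab u m = a -> #|nbhd u| <= 4 -> nbhd u \subset nbhd m.
Proof.
move=> um small; have common := card_common_nbhd um.
have -> : nbhd u = nbhd u :&: nbhd m.
  by apply/esym/eqP; rewrite eqEcard subsetIl (leq_trans small common).
exact: subsetIr.
Qed.

Lemma card_nbhd_ge5 (u : U) : 5 <= #|nbhd u|.
Proof.
rewrite leqNgt; apply/negP => small.
have [m um] := exists_lab a u.
have card4 : #|nbhd u| = 4.
  apply/eqP; rewrite eqn_leq -ltnS small.
  by rewrite (leq_trans (card_common_nbhd um)) ?subset_leq_card ?subsetIl.
have [v uv] := exists_adj u.
have sub : u |: a_nbhd u \subset nbhd v.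
  apply/subsetP => z /setU1P [-> | ]; first by rewrite in_set adj_sym.
  rewrite in_set => /eqP uz.
  have : v \in nbhd z by apply: (subsetP (nbhd_sub_small uz _)); rewrite ?card4 ?in_set.
  by rewrite !in_set adj_sym.
have := subset_leq_card sub; rewrite cardsU1 in_set lab_diag atom_eqE /=.
have := card_nbhd_edge uv; have := card_nbhd_a_nbhd u; lia.
Qed.

Lemma card_nbhd_eq5 (u : U) : #|U| = 11 -> #|nbhd u| = 5.
Proof.
move=> U11; have [v uv] := exists_adj u.
have := card_nbhd_edge uv; have := card_nbhd_ge5 u; have := card_nbhd_ge5 v.
rewrite U11; lia.
Qed.

Lemma network_card_neq11 : #|U| != 11.
Proof.
apply/eqP => U11; have := sum_card_rel_even adj_sym adj_irr.
by rewrite (eq_bigr (fun _ => 5)) => [|u _]; rewrite ?sum_nat_const ?U11 ?card_nbhd_eq5.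
Qed.

End AtomNetwork.

Theorem mainTheorem5 : ~ in_Spec 11.
Proof.
case=> U [h [U11 hrep]].
have := network_card_neq11 (atom_label_eq_e hrep) (atom_label_sym hrep) (atom_label_comp hrep).
by rewrite U11.
Qed.
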